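(* Let $\mathcal{O}$ be an operad, $A$ a color of $\mathcal{O}$, and $L\subseteq\mathcal{O}(A)$ a regular language of constants. If $F:\mathcal{O}\to\mathcal{P}$ is a finitary ULF functor of operads, then the image $F(L)\subseteq\mathcal{P}(F(A))$ is a regular language of constants in $\mathcal{P}$.
   Context: Operads are colored, non-symmetric operads; $\mathcal{O}(A)$ denotes the set of constants (nullary operations) of output color $A$. A functor of operads $p:\mathcal{Q}\to\mathcal{O}$ is ULF if for every operation $\alpha$ of $\mathcal{Q}$ and operations $g,h$ of $\mathcal{O}$ and index $i$ with $p(\alpha)=g\circ_i h$ there is a unique pair $\beta,\gamma$ with $\alpha=\beta\circ_i\gamma$, $p(\beta)=g$, $p(\gamma)=h$; it is finitary if its fibers over every color and every operation are finite. A nondeterministic finite-state automaton over $\mathcal{O}$ is a tuple $M=(\mathcal{O},\mathcal{Q},p,q_r)$ with $p:\mathcal{Q}\to\mathcal{O}$ finitary ULF and $q_r$ a color of $\mathcal{Q}$; it recognizes $\{p(\alpha)\mid\alpha\in\mathcal{Q}(q_r)\}\subseteq\mathcal{O}(p(q_r))$. A subset $L\subseteq\mathcal{O}(A)$ is a regular language of constants if it is the language recognized by such an automaton with $p(q_r)=A$. *)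

From Stdlib Require List.
From mathcomp Require Import all_boot.
Set Implicit Arguments. Unset Strict Implicit. Unset Printing Implicit Defensive.

(* Colored non-symmetric operads, presented by partial compositions.  The partial composition [comp f i g] (= f o_i g) is a total
   function, but only meaningful (and only constrained by the axioms) when
   [composable f i g], i.e. the i-th input color of f is the output of g. *)

Definition composable_gen (C X : Type) (ins : X -> seq C) (out : X -> C)
  (f : X) (i : nat) (g : X) : Prop :=
  List.nth_error (ins f) i = Some (out g).

Record Operad := {
  col : Type;
  op : Type;
  ins : op -> seq col;
  out : op -> col;
  idop : col -> op;
  comp : op -> nat -> op -> op;
  ins_id : forall c, ins (idop c) = [:: c];
  out_id : forall c, out (idop c) = c;
  ins_comp : forall f i g, composable_gen ins out f i g ->
    ins (comp f i g) = take i (ins f) ++ ins g ++ drop i.+1 (ins f);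
  out_comp : forall f i g, composable_gen ins out f i g ->
    out (comp f i g) = out f;
  comp_id_l : forall f, comp (idop (out f)) 0 f = f;
  comp_id_r : forall f i c, List.nth_error (ins f) i = Some c ->
    comp f i (idop c) = f;
  comp_seq : forall f i g j h,
    composable_gen ins out f i g -> composable_gen ins out g j h ->
    comp (comp f i g) (i + j) h = comp f i (comp g j h);
  comp_par : forall f i g j h, i < j ->
    composable_gen ins out f i g -> composable_gen ins out f j h ->
    comp (comp f j h) i g = comp (comp f i g) (j + size (ins g)).-1 h
}.

Arguments ins {o}. Arguments out {o}. Arguments idop {o}. Arguments comp {o}.

Definition composable (O : Operad) (f : op O) (i : nat) (g : op O) : Prop :=
  List.nth_error (ins f) i = Some (out g).

Record OpFunctor (O P : Operad) := {
  fcol : col O -> col P;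
  fop : op O -> op P;
  fins : forall f, ins (fop f) = map fcol (ins f);
  fout : forall f, out (fop f) = fcol (out f);
  fid : forall c, fop (idop c) = idop (fcol c);
  fcomp : forall f i g, composable f i g ->
    fop (comp f i g) = comp (fop f) i (fop g)
}.

Arguments fcol {O P}. Arguments fop {O P}.

Definition ULF (Q O : Operad) (p : OpFunctor Q O) : Prop :=
  forall (a : op Q) (g h : op O) (i : nat),
    composable g i h -> fop p a = comp g i h ->
    exists b : op Q, exists c : op Q,
      [/\ composable b i c, a = comp b i c, fop p b = g, fop p c = h
        & forall b' c' : op Q, composable b' i c' -> a = comp b' i c' ->
            fop p b' = g -> fop p c' = h -> b' = b /\ c' = c].

Definition finitary (Q O : Operad) (p : OpFunctor Q O) : Prop :=
  (forall c : col O, exists s : seq (col Q),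
      forall x, fcol p x = c -> List.In x s) /\
  (forall f : op O, exists s : seq (op Q),
      forall x, fop p x = f -> List.In x s).

Definition is_constant (O : Operad) (A : col O) (x : op O) : Prop :=
  ins x = [::] /\ out x = A.

(* Language recognized by the automaton (O, Q, p, q_r). *)
Definition recognized (O Q : Operad) (p : OpFunctor Q O) (qr : col Q)
  : op O -> Prop :=
  fun x => exists a : op Q, is_constant qr a /\ fop p a = x.

Definition regular_constants (O : Operad) (A : col O) (L : op O -> Prop)
  : Prop :=
  exists (Q : Operad) (p : OpFunctor Q O) (qr : col Q),
    [/\ finitary p, ULF p, fcol p qr = A
      & forall x, L x <-> recognized p qr x].

Definition image_lang (O P : Operad) (F : OpFunctor O P) (L : op O -> Prop)
  : op P -> Prop :=
  fun y => exists x, L x /\ fop F x = y.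

From mathcomp Require Import all_boot.

(* An automaton [p : Q -> O] recognizing [L] composes with [F] into an
   automaton [F \o p : Q -> P] with the same root, and its recognized language
   is exactly [F(L)].  So it suffices that finitary ULF functors are closed
   under composition: fibers of [F \o p] are finite unions of fibers of [p],
   and a factorization of [F (p a)] lifts uniquely first along [F], then
   along [p]. *)

Lemma fop_composable (O P : Operad) (F : OpFunctor O P) f i g :
  composable f i g -> composable (fop F f) i (fop F g).
Proof. by rewrite /composable fins fout List.nth_error_map => ->. Qed.

Section FunctorComposition.

Variables (Q O P : Operad) (p : OpFunctor Q O) (F : OpFunctor O P).

Let fcolFp (c : col Q) : col P := fcol F (fcol p c).
Let fopFp (f : op Q) : op P := fop F (fop p f).

Lemma fins_comp f : ins (fopFp f) = map fcolFp (ins f).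
Proof. by rewrite /fopFp !fins -map_comp. Qed.

Lemma fout_comp f : out (fopFp f) = fcolFp (out f).
Proof. by rewrite /fopFp !fout. Qed.

Lemma fid_comp c : fopFp (idop c) = idop (fcolFp c).
Proof. by rewrite /fopFp !fid. Qed.

Lemma fcomp_comp f i g :
  composable f i g -> fopFp (comp f i g) = comp (fopFp f) i (fopFp g).
Proof. by move=> fig; rewrite /fopFp !fcomp //; apply: fop_composable. Qed.

Definition functor_comp : OpFunctor Q P :=
  Build_OpFunctor fins_comp fout_comp fid_comp fcomp_comp.

End FunctorComposition.

Arguments functor_comp {Q O P}.

Lemma fiber_cover_seq {A B : Type} (R : A -> B -> Prop) (s : seq A) :
  (forall a, exists t : seq B, forall x, R a x -> List.In x t) ->
  exists t : seq B, forall x, (exists2 a, List.In a s & R a x) -> List.In x t.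
Proof.
move=> fiberR; elim: s => [|a s [t covt]]; first by exists [::] => x [].
have [u covu] := fiberR a.
exists (u ++ t) => x [b [<-|sb] Rbx]; apply: List.in_or_app.
  by left; apply: covu.
by right; apply: covt; exists b.
Qed.

Lemma finitary_comp (Q O P : Operad) (p : OpFunctor Q O) (F : OpFunctor O P) :
  finitary p -> finitary F -> finitary (functor_comp p F).
Proof.
move=> [pcol pop] [Fcol Fop]; split.
- move=> c; have [s covs] := Fcol c.
  have [t covt] := fiber_cover_seq (fun c x => fcol p x = c) s pcol.
  by exists t => x Fpx; apply: covt; exists (fcol p x); first exact: covs.
- move=> f; have [s covs] := Fop f.
  have [t covt] := fiber_cover_seq (fun f x => fop p x = f) s pop.
  by exists t => x Fpx; apply: covt; exists (fop p x); first exact: covs.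
Qed.

Lemma ULF_comp (Q O P : Operad) (p : OpFunctor Q O) (F : OpFunctor O P) :
  ULF p -> ULF F -> ULF (functor_comp p F).
Proof.
move=> ULFp ULFF a g h i gih /= Fpa.
have [b0 [c0 [bc0 Epa Fb0 Fc0 uniqF]]] := ULFF _ _ _ _ gih Fpa.
have [b [c [bc Ea pb pc uniqp]]] := ULFp _ _ _ _ bc0 Epa.
exists b, c; split=> //=; rewrite ?pb ?pc //.
move=> b' c' bc' Ea' Fpb' Fpc'.
have [pb' pc'] : fop p b' = b0 /\ fop p c' = c0.
  by apply: uniqF; rewrite ?Ea' ?fcomp //; apply: fop_composable.
exact: uniqp.
Qed.

Lemma image_recognized (Q O P : Operad) (p : OpFunctor Q O)
    (F : OpFunctor O P) (qr : col Q) y :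
  image_lang F (recognized p qr) y <-> recognized (functor_comp p F) qr y.
Proof.
split.
- by move=> [_ [[a [qa <-]] <-]]; exists a.
- by move=> [a [qa <-]]; exists (fop p a); split=> //; exists a.
Qed.

Theorem mainTheorem11 (O P : Operad) (A : col O) (L : op O -> Prop)
  (F : OpFunctor O P) :
  regular_constants A L -> finitary F -> ULF F ->
  regular_constants (fcol F A) (image_lang F L).
Proof.
move=> [Q [p [qr [finp ULFp pqr recL]]]] finF ULFF.
exists Q, (functor_comp p F), qr; split.
- exact: finitary_comp.
- exact: ULF_comp.
- by rewrite /= pqr.
move=> y; rewrite -image_recognized.
by split=> [[x [Lx <-]]|[x [/recL Lx <-]]]; exists x; split=> //; apply/recL.
Qed.
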